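(* Let $r \in \mathbb{Z}_{\geqslant 2}$. For any real $x \geqslant 1$, \begin{align*} \sum_{1 \leqslant n_1 < \dotsb < n_r \leqslant x} \mu \left( n_1 \dotsb n_r \right) \left \lfloor \frac{x}{n_1 \dotsb n_r} \right \rfloor &= \frac{1}{r!} \sum_{n_1 ,\dotsc ,n_r \leqslant x} \mu \left( n_1 \dotsb n_r \right) \left \lfloor \frac{x}{n_1 \dotsb n_r} \right \rfloor \\ &\quad - \frac{1}{r!}\sum_{j=2}^{r-2} (-1)^j (j-1) \binom{r}{j} \sum_{n \leqslant x} (1-r+j)^{\omega(n)} - \frac{(-1)^r \lfloor x \rfloor}{r(r-2)!} + \frac{(-1)^{r}(r-2)}{(r-1)!}. \end{align*}
   Context: $\mu$ is the Möbius function, $\lfloor\cdot\rfloor$ the integer part, and $\omega(n)$ the number of distinct prime factors of $n$. The first sum on the right runs over all $r$-tuples of positive integers at most $x$; an empty sum (e.g. over $j$ when $r<4$) is $0$. *)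

From HB Require Import structures.
From mathcomp Require Import all_boot all_order all_algebra.
From mathcomp Require Import reals.
Set Implicit Arguments. Unset Strict Implicit. Unset Printing Implicit Defensive.
Import Order.TTheory GRing.Theory Num.Theory.

Definition omega (n : nat) : nat := size (primes n).

(* Moebius function (with the convention mu 0 = 0, irrelevant here):
   mu n = (-1)^k if n is a product of k distinct primes, 0 if some p^2 | n. *)
Definition squarefree (n : nat) : bool :=
  (0 < n)%N && all (fun p => logn p n == 1)%N (primes n).

Definition mobius (n : nat) : int :=
  if squarefree n then ((-1) ^+ omega n)%R else 0%R.

(* Counting multiples, mu(n_1 ... n_r) floor(x / (n_1 ... n_r)) is the sum over n <= x of
   mu(n_1 ... n_r) [n_1 ... n_r | n].  The summand is symmetric, so tuples with distinct
   entries contribute r! times the increasing ones.  A tuple with squarefree product can repeat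
   an entry only if that entry is 1; hence it is non-injective iff at least two entries are 1,
   and the indicator of this is the sum over sets S of coordinates equal to 1 of
   (-1)^|S| (|S| - 1), for |S| >= 2.  Once the coordinates in S are fixed to 1, the other
   k = r - |S| coordinates contribute (1 - k)^omega(n): removing one prime p of n, either no
   coordinate is divisible by p, or exactly one of the k free coordinates is p times a tuple
   counted for n / p^(v_p(n)).  The weights j = r - 1 and j = r give the two explicit
   correction terms, since 0^omega(n) = [n = 1]. *)

From HB Require Import structures.
From mathcomp Require Import all_boot all_order all_algebra all_fingroup.
From mathcomp Require Import reals ring.
Import Order.TTheory GRing.Theory Num.Theory.

Set Implicit Arguments. Unset Strict Implicit. Unset Printing Implicit Defensive.

Lemma mobius0 : mobius 0 = 0%R.
Proof. by []. Qed.

Lemma mobius_sqr p d : prime p -> p * p %| d -> mobius d = 0%R.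
Proof.
move=> p_pr ppd; rewrite /mobius /squarefree.
have [->|d_gt0] := posnP d; first by [].
have p_d : p \in primes d.
  by rewrite mem_primes p_pr d_gt0 (dvdn_trans (dvdn_mulr p (dvdnn p)) ppd).
have log_gt1 : 1 < logn p d by rewrite -(pfactor_dvdn 2 p_pr d_gt0).
by case: ifP => // /andP[_ /allP/(_ p p_d)/eqP log1]; rewrite log1 in log_gt1.
Qed.

Lemma primes_pexpM p a m : prime p -> 0 < m -> ~~ (p %| m) ->
  perm_eq (primes (p ^ a.+1 * m)) (p :: primes m).
Proof.
move=> p_pr m_gt0 p'm; apply: uniq_perm => [||q]; rewrite ?primes_uniq //=.
  by rewrite primes_uniq mem_primes (negbTE p'm) !andbF.
have pa_gt0 : 0 < p ^ a.+1 by rewrite expn_gt0 prime_gt0.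
by rewrite primesM // primesX // primes_prime // !inE.
Qed.

Lemma omega_pexpM p a m : prime p -> 0 < m -> ~~ (p %| m) ->
  omega (p ^ a.+1 * m) = (omega m).+1.
Proof. by move=> p_pr m_gt0 p'm; rewrite /omega (perm_size (primes_pexpM a p_pr m_gt0 p'm)). Qed.

Lemma mobius_mul_prime p d : prime p -> 0 < d -> ~~ (p %| d) ->
  mobius (p * d) = (- mobius d)%R.
Proof.
move=> p_pr d_gt0 p'd; have p_gt0 := prime_gt0 p_pr.
have sqfE : squarefree (p * d) = squarefree d.
  rewrite /squarefree muln_gt0 p_gt0 d_gt0 -[p in p * d]expn1.
  rewrite (perm_all _ (primes_pexpM 0 p_pr d_gt0 p'd)) /= expn1.
  rewrite lognM // logn_prime // eqxx logn_coprime ?prime_coprime //=.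
  apply: eq_in_all => q; rewrite mem_primes => /and3P[_ _ q_d].
  rewrite lognM // logn_prime //; case: (q =P p) => [qp|//].
  by rewrite -qp q_d in p'd.
rewrite /mobius sqfE -[p in p * d]expn1 omega_pexpM //.
by case: ifP => _; rewrite ?oppr0 // exprS mulN1r.
Qed.

Lemma count_dvdn_prod (I : Type) (s : seq I) (F : I -> nat) p : prime p ->
  ~~ (p * p %| \prod_(i <- s) F i) ->
  \sum_(i <- s) (p %| F i) = (p %| \prod_(i <- s) F i).
Proof.
move=> p_pr; elim: s => [|a s IHs]; first by rewrite !big_nil (Euclid_dvd1 p_pr).
rewrite !big_cons => p2'.
have p2's : ~~ (p * p %| \prod_(i <- s) F i).
  by apply: contra p2'; apply: dvdn_mull.
rewrite IHs // Euclid_dvdM //.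
case pa: (p %| F a); case ps: (p %| \prod_(i <- s) F i) => //=.
by rewrite (dvdn_mul pa ps) in p2'.
Qed.

Lemma dvdn_pexpM_coprime p a m d : prime p -> ~~ (p %| d) -> (d %| p ^ a * m) = (d %| m).
Proof. by move=> p_pr p'd; rewrite Gauss_dvdr // coprime_sym coprimeXl ?prime_coprime. Qed.

Lemma dvdn_pexpSM p a m d : prime p -> ~~ (p %| d) -> (p * d %| p ^ a.+1 * m) = (d %| m).
Proof. by move=> p_pr p'd; rewrite expnS -mulnA dvdn_pmul2l ?prime_gt0 ?dvdn_pexpM_coprime. Qed.

Section BinomialSums.
Local Open Scope ring_scope.

Lemma sum_alternating_binom t :
  \sum_(j < t.+1) (-1) ^+ j *+ 'C(t, j) = (t == 0%N)%:R :> int.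
Proof.
rewrite -expr0n -(subrr (1 : int)) exprDn; apply: eq_bigr => j _.
by rewrite expr1n mul1r.
Qed.

Lemma sum_alternating_binom_mul t :
  \sum_(j < t.+1) (-1) ^+ j * j%:R *+ 'C(t, j) = - (t == 1%N)%:R :> int.
Proof.
case: t => [|t]; first by rewrite big_ord_recl big_ord0 mulr0 mul0rn addr0 oppr0.
rewrite big_ord_recl mulr0 mul0rn add0r.
under eq_bigr => j _ do
  rewrite lift0 mulr_natr -mulrnA -mul_bin_diag mulnC mulrnA exprS mulN1r !mulNrn.
rewrite sumrN sumrMnl sum_alternating_binom.
by case: t => [|t]; rewrite ?mul0rn ?oppr0.
Qed.

Definition pair_weight (j : nat) : int := if (1 < j)%N then (-1) ^+ j * (j%:R - 1) else 0.

Lemma sum_pair_weight_binom t :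
  \sum_(j < t.+1) pair_weight j *+ 'C(t, j) = (1 < t)%N%:R :> int.
Proof.
have weightE j : pair_weight j = (-1) ^+ j * j%:R - (-1) ^+ j + (j == 0%N)%:R.
  by case: j => [|[|j]]; rewrite /pair_weight /=; ring.
under eq_bigr => j _ do rewrite weightE mulrnDl mulrnBl.
rewrite big_split sumrB /= sum_alternating_binom_mul sum_alternating_binom.
rewrite big_ord_recl bin0 big1 ?addr0 => [|j _]; last by rewrite mul0rn.
by case: t => [|[|t]].
Qed.

Lemma sum_subsets_card (T : finType) (V : nmodType) (A : {set T}) (g : nat -> V) :
  \sum_(S : {set T} | S \subset A) g #|S| = \sum_(0 <= j < #|A|.+1) g j *+ 'C(#|A|, j).
Proof.
rewrite big_mkord (partition_big (fun S : {set T} => inord #|S| : 'I_#|A|.+1) xpredT) //=.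
apply: eq_bigr => j _; rewrite -cards_draws -sumr_const.
apply: eq_big => S; rewrite ?inE; case: (boolP (S \subset A)) => //= sSA;
  have ltSA : (#|S| < #|A|.+1)%N by rewrite ltnS subset_leq_card.
- apply/eqP/eqP => [<-|eSj]; first by rewrite inordK.
  by apply: val_inj; rewrite /= inordK.
- by move=> /eqP <-; rewrite inordK.
Qed.

End BinomialSums.

Section IncreasingTuples.
Variables r N : nat.
Local Notation T := {ffun 'I_r -> 'I_N.+1}.
Implicit Types f g : T.

Definition increasing f := [forall i : 'I_r, forall j : 'I_r, (i < j) ==> (f i < f j)].

Definition ftuple f : r.-tuple 'I_N.+1 := [tuple f i | i < r].

Lemma ftuple_inj : injective ftuple.
Proof.
move=> f g fg; apply/ffunP => i.
by rewrite -(tnth_mktuple f i) -(tnth_mktuple g i) -/(ftuple f) -/(ftuple g) fg.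
Qed.

Lemma nth_ftuple f (i : 'I_r) : nth ord0 (ftuple f) i = f i.
Proof. by rewrite -tnth_nth tnth_mktuple. Qed.

Lemma increasing_sorted f : increasing f = sorted ltn (map val (ftuple f)).
Proof.
rewrite (sorted_pairwise ltn_trans); apply/forallP/(pairwiseP 0) => [inc i j|sorted_f i].
  rewrite !inE size_map size_tuple => ir jr.
  rewrite !(nth_map ord0) ?size_tuple // -[i]/(Ordinal ir : nat) -[j]/(Ordinal jr : nat).
  by rewrite !nth_ftuple; apply/implyP/(forallP (inc _)).
apply/forallP => j; apply/implyP => ij.
have := sorted_f i j; rewrite !inE size_map size_tuple !(nth_map ord0) ?size_tuple //.
by rewrite !nth_ftuple; apply.
Qed.

Lemma increasing_inj g : increasing g -> injective g.
Proof.
move=> g_inc i j gij; apply: val_inj; move/forallP: g_inc => g_inc.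
case: (ltngtP i j) => // [ij|ji].
  by have := implyP (forallP (g_inc i) j) ij; rewrite gij ltnn.
by have := implyP (forallP (g_inc j) i) ji; rewrite gij ltnn.
Qed.

Lemma increasing_perm_eq g1 g2 : increasing g1 -> increasing g2 ->
  perm_eq (ftuple g1) (ftuple g2) -> g1 = g2.
Proof.
rewrite !increasing_sorted => sorted1 sorted2 g12.
apply/ftuple_inj/val_inj/(inj_map val_inj).
by apply: (irr_sorted_eq ltn_trans ltnn sorted1 sorted2); apply/perm_mem/perm_map.
Qed.

Lemma exists_increasing_perm f : injectiveb f ->
  exists2 g, increasing g & perm_eq (ftuple f) (ftuple g).
Proof.
move=> /injectiveP f_inj; pose s := sort_tuple (relpre val leq) (ftuple f).
pose g : T := [ffun i => tnth s i].
have ftuple_g : ftuple g = s by apply: eq_from_tnth => i; rewrite tnth_mktuple ffunE.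
exists g; last by rewrite ftuple_g perm_sym perm_sort.
rewrite increasing_sorted ftuple_g /= -sort_map ltn_sorted_uniq_leq sort_uniq.
by rewrite map_inj_uniq ?map_inj_uniq ?sort_sorted //= -?enumT ?enum_uniq //; apply: val_inj.
Qed.

Lemma perm_ftupleP f g :
  reflect (exists s : 'S_r, f = [ffun i => g (s i)]) (perm_eq (ftuple f) (ftuple g)).
Proof.
have ftupleE (s : 'S_r) : ftuple [ffun i => g (s i)] = [tuple tnth (ftuple g) (s i) | i < r].
  by apply: eq_from_tnth => i; rewrite !tnth_mktuple ffunE.
apply: (iffP tuple_permP) => -[s fE]; exists s; last by rewrite fE ftupleE.
by apply: ftuple_inj; rewrite ftupleE; apply: val_inj.
Qed.

Lemma sum_injective_increasing (V : nmodType) (W : T -> V) :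
  (forall f (s : 'S_r), W [ffun i => f (s i)] = W f) ->
  (\sum_(f : T | injectiveb f) W f = (\sum_(g : T | increasing g) W g) *+ r`!)%R.
Proof.
move=> W_perm.
rewrite (eq_bigr (fun f =>
  \sum_(g : T | increasing g && perm_eq (ftuple f) (ftuple g)) W f)%R); last first.
  move=> f /exists_increasing_perm[g0 g0_inc f_g0]; rewrite (big_pred1 g0) // => g /=.
  apply/andP/eqP => [[g_inc f_g]|->]; last by [].
  apply: increasing_perm_eq g_inc g0_inc _.
  by rewrite perm_sym (perm_trans _ f_g) // perm_sym.
rewrite (exchange_big_dep increasing) => [|f g _ /andP[]//]; rewrite /= -sumrMnl.
apply: eq_bigr => g g_inc.
rewrite (eq_bigl (mem [set [ffun i => g (s i)] | s : 'S_r])) => [|f]; last first.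
  rewrite g_inc; apply/andP/imsetP => [[_ f_g]|[s _ ->]].
    by have [s ->] := perm_ftupleP f g f_g; exists s.
  split; last by apply/perm_ftupleP; exists s.
  by apply/injectiveP => i j; rewrite !ffunE => /(increasing_inj g_inc)/perm_inj.
rewrite big_imset => [|s1 s2 _ _ /ffunP s12]; last first.
  by apply/permP => i; apply: (increasing_inj g_inc); have := s12 i; rewrite !ffunE.
by rewrite (eq_bigr (fun _ => W g)) => [|s _]; rewrite ?W_perm // sumr_const card_Sn.
Qed.

End IncreasingTuples.

Lemma divn_count_dvd N m : 0 < m -> N %/ m = \sum_(1 <= n < N.+1) (m %| n).
Proof.
move=> m_gt0; elim: N => [|N IHN]; first by rewrite div0n big_geq.
by rewrite big_nat_recr //= divnS // IHN addnC.
Qed.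

Definition mobius_quot N m : int := (mobius m * (N %/ m)%:Z)%R.

Section CoordinateSums.
Variables r N : nat.
Local Notation T := {ffun 'I_r -> 'I_N.+1}.
Implicit Types (f g : T) (i : 'I_r) (v : 'I_N.+1) (S : {set 'I_r}) (n : nat).

Definition prodf (f : T) := \prod_(i < r) (f i : nat).

Definition mobius_dvd n (f : T) : int := if prodf f %| n then mobius (prodf f) else 0%R.

Definition one_on (S : {set 'I_r}) (f : T) := [forall j in S, (f j : nat) == 1].

Definition one_on_sum S n := (\sum_(f | one_on S f) mobius_dvd n f)%R.

Definition set_coord (f : T) i v : T := [ffun j => if j == i then v else f j].

Lemma prodf_D1 f i : prodf f = f i * \prod_(j < r | j != i) (f j : nat).
Proof. exact: bigD1. Qed.

Lemma dvdn_coord_prodf f i : f i %| prodf f.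
Proof. by rewrite (prodf_D1 f i) dvdn_mulr. Qed.

Lemma prodf_set_coord f i v :
  prodf (set_coord f i v) = v * \prod_(j < r | j != i) (f j : nat).
Proof.
rewrite (prodf_D1 _ i) ffunE eqxx; congr (_ * _).
by apply: eq_bigr => j /negbTE ji; rewrite ffunE ji.
Qed.

Lemma set_coordK f i v : set_coord (set_coord f i v) i (f i) = f.
Proof. by apply/ffunP => j; rewrite !ffunE; case: eqP => // ->. Qed.

Lemma one_on_set_coord S f i v : i \notin S -> one_on S (set_coord f i v) = one_on S f.
Proof.
move=> iS; apply: eq_forallb => j; rewrite ffunE.
by have [->|//] := eqVneq j i; rewrite (negbTE iS).
Qed.

Lemma mobius_dvd_prodf0 n f : prodf f = 0 -> mobius_dvd n f = 0%R.
Proof. by rewrite /mobius_dvd => ->; rewrite mobius0 if_same. Qed.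

Lemma mobius_dvd_sqr n f p : prime p -> p * p %| prodf f -> mobius_dvd n f = 0%R.
Proof. by move=> p_pr pp_f; rewrite /mobius_dvd (mobius_sqr p_pr pp_f) if_same. Qed.

Lemma prodf_perm f (s : 'S_r) : prodf [ffun i => f (s i)] = prodf f.
Proof.
rewrite /prodf [RHS](reindex_inj (@perm_inj _ s)).
by apply: eq_bigr => i _; rewrite ffunE.
Qed.

Lemma mobius_quot_prodf f :
  mobius_quot N (prodf f) = (\sum_(1 <= n < N.+1) mobius_dvd n f)%R.
Proof.
have [f0|f_gt0] := posnP (prodf f).
  by rewrite /mobius_quot f0 mobius0 mul0r big1 // => n _; rewrite mobius_dvd_prodf0.
rewrite /mobius_quot divn_count_dvd // -natz mulr_natr -sumrMnr.
by apply: eq_bigr => n _; rewrite mulrb.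
Qed.

Lemma sum_coord_dvd n f p : prime p ->
  (\sum_(i < r) (if (p %| f i)%N then mobius_dvd n f else 0) =
   if (p %| prodf f)%N then mobius_dvd n f else 0)%R.
Proof.
move=> p_pr; under eq_bigr => i _ do rewrite -mulrb.
rewrite sumrMnr; have [->|fn0] := eqVneq (mobius_dvd n f) 0%R.
  by rewrite mul0rn if_same.
have pp'f : ~~ (p * p %| prodf f) by apply: contra fn0 => /(mobius_dvd_sqr n p_pr)/eqP.
by rewrite /prodf in pp'f *; rewrite count_dvdn_prod // mulrb.
Qed.

Section PrimeStep.
Variables p a m : nat.
Hypotheses (p_pr : prime p) (m_gt0 : 0 < m) (p'm : ~~ (p %| m)).
Hypothesis n_le_N : p ^ a.+1 * m <= N.
Local Notation n := (p ^ a.+1 * m).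

Lemma mobius_dvd_split f :
  (mobius_dvd n f =
   mobius_dvd m f + \sum_(i < r) (if (p %| f i)%N then mobius_dvd n f else 0))%R.
Proof.
rewrite sum_coord_dvd //; case: ifP => p_f.
  suff -> : mobius_dvd m f = 0%R by rewrite add0r.
  by rewrite /mobius_dvd; case: ifP => // f_m; move: p'm; rewrite (dvdn_trans p_f f_m).
by rewrite addr0 /mobius_dvd dvdn_pexpM_coprime ?p_f.
Qed.

Lemma mobius_dvd_set_coord_mul g i v : v = p * g i :> nat ->
  mobius_dvd n (set_coord g i v) = (- mobius_dvd m g)%R.
Proof.
move=> vE; have prodE : prodf (set_coord g i v) = p * prodf g.
  by rewrite prodf_set_coord (prodf_D1 g i) vE mulnA.
rewrite /mobius_dvd prodE; have [p_g|p'g] := boolP (p %| prodf g).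
  rewrite (mobius_sqr p_pr (dvdn_mul (dvdnn p) p_g)) if_same.
  by case: ifP => // g_m; move: p'm; rewrite (dvdn_trans p_g g_m).
have g_gt0 : 0 < prodf g by case: (prodf g) p'g; rewrite ?dvdn0.
by rewrite dvdn_pexpSM // mobius_mul_prime //; case: ifP; rewrite ?oppr0.
Qed.

Lemma mobius_dvd_coord_le g i : mobius_dvd m g != 0%R -> p * g i <= N.
Proof.
rewrite /mobius_dvd; case: ifP => [g_m _|]; last by rewrite eqxx.
apply: (leq_trans _ n_le_N); rewrite expnS -mulnA leq_mul2l; apply/orP; right.
apply: (leq_trans (dvdn_leq m_gt0 (dvdn_trans (dvdn_coord_prodf g i) g_m))).
by rewrite leq_pmull // expn_gt0 prime_gt0.
Qed.

Lemma sum_one_on_dvd_coord S i : i \notin S ->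
  (\sum_(f | one_on S f && (p %| f i)%N) mobius_dvd n f = - one_on_sum S m)%R.
Proof.
move=> iS.
(* Reindex by f_i = p * g_i; when p * g_i > N both sides vanish, by mobius_dvd_coord_le. *)
rewrite (reindex_onto (fun g => set_coord g i (inord (p * g i)))
                                 (fun f => set_coord f i (inord (f i %/ p)))); last first.
  move=> f /andP[_ p_fi]; apply/ffunP => j; rewrite !ffunE; case: eqP => [->|//].
  have lt_fp : f i %/ p < N.+1 by rewrite (leq_ltn_trans (leq_div _ _)).
  by apply: val_inj; rewrite eqxx /= (inordK lt_fp) mulnC divnK // inordK.
rewrite /one_on_sum -sumrN big_mkcond [RHS]big_mkcond; apply: eq_bigr => g _.
rewrite one_on_set_coord // ffunE eqxx.
have [le_pgN|lt_Npg] := leqP (p * g i) N.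
  have vE : (inord (p * g i) : 'I_N.+1) = p * g i :> nat by rewrite inordK.
  rewrite vE dvdn_mulr // mulKn ?prime_gt0 // inord_val set_coordK eqxx !andbT.
  by case: ifP => // _; rewrite (mobius_dvd_set_coord_mul vE).
have -> : mobius_dvd m g = 0%R.
  by apply/eqP; apply: contraTT lt_Npg => /mobius_dvd_coord_le; rewrite -leqNgt.
rewrite oppr0 if_same mobius_dvd_prodf0 ?if_same // prodf_set_coord /= val_insubd.
by rewrite ltnS leqNgt lt_Npg.
Qed.

Lemma one_on_sum_pexpM S : one_on_sum S n = ((1 - (r - #|S|)%:Z) * one_on_sum S m)%R.
Proof.
rewrite /one_on_sum (eq_bigr _ (fun f _ => mobius_dvd_split f)) big_split /=.
rewrite exchange_big /=.
under [X in (_ + X)%R]eq_bigr => i _ do rewrite -big_mkcondr /=.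
have sum_in_S :
    (\sum_(i in S) \sum_(f | one_on S f && (p %| f i)%N) mobius_dvd n f = 0)%R.
  apply: big1 => i iS; apply: big_pred0 => f.
  by apply/negbTE/negP => /andP[/forall_inP/(_ i iS)/eqP ->]; rewrite Euclid_dvd1.
rewrite (bigID (mem S)) /= sum_in_S add0r.
rewrite (eq_bigr _ (fun i iS => sum_one_on_dvd_coord iS)) sumr_const.
have -> : #|[pred i | i \notin S]| = r - #|S|.
  rewrite -[X in X - _](card_ord r) -(cardsC S) addKn.
  by apply: eq_card => i; rewrite !inE.
by rewrite mulrBl mul1r mulNrn -mulr_natl natz /one_on_sum.
Qed.

End PrimeStep.

Lemma one_on_sum1 S : 0 < N -> one_on_sum S 1 = 1%R.
Proof.
move=> N_gt0; pose one : T := [ffun _ => inord 1].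
have oneE j : one j = 1 :> nat by rewrite ffunE inordK.
rewrite /one_on_sum (bigD1 one) /=; last by apply/forall_inP => j _; rewrite oneE.
rewrite big1 ?addr0 => [|f /andP[_ f_one]].
  by rewrite /mobius_dvd /prodf big1 // => j _; rewrite oneE.
rewrite /mobius_dvd dvdn1; case: eqP => // /eqP prod1; case/eqP: f_one.
apply/ffunP => j; apply: val_inj; rewrite /= oneE.
by move: prod1; rewrite (prodf_D1 f j) muln_eq1 => /andP[/eqP].
Qed.

Lemma one_on_sum_omega S n : 0 < n <= N ->
  one_on_sum S n = ((1 - (r - #|S|)%:Z) ^+ omega n)%R.
Proof.
elim/ltn_ind: n => n IHn /andP[n_gt0 n_le_N].
have [n_le1|n_gt1] := leqP n 1.
  have -> : n = 1 by apply/eqP; rewrite eqn_leq n_le1.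
  by rewrite one_on_sum1 ?(leq_trans n_gt0).
have p_pr := pdiv_prime n_gt1; set p := pdiv n in p_pr *.
have [m p'm nE] := pfactor_coprime p_pr n_gt0.
rewrite prime_coprime // in p'm.
have m_gt0 : 0 < m by move: n_gt0; rewrite nE muln_gt0 => /andP[].
have k_gt0 : 0 < logn p n by rewrite logn_gt0 mem_primes p_pr n_gt0 pdiv_dvd.
set k := (logn p n).-1; have {}nE : n = p ^ k.+1 * m by rewrite prednK // mulnC.
have lt_mn : m < n.
  by rewrite nE ltn_Pmull // (leq_ltn_trans (ltn0Sn k)) // ltn_expl // prime_gt1.
rewrite nE in n_le_N *; rewrite one_on_sum_pexpM // omega_pexpM // exprS IHn //.
by rewrite m_gt0 (leq_trans (ltnW lt_mn)) // nE.
Qed.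

Definition ones f := [set j | (f j : nat) == 1].

Lemma one_on_subset S f : one_on S f = (S \subset ones f).
Proof.
apply/forall_inP/subsetP => [f_one j jS|S_ones j jS]; first by rewrite inE f_one.
by have := S_ones j jS; rewrite inE.
Qed.

Lemma injectiveb_sqfree f :
  0 < prodf f -> (forall p, prime p -> ~~ (p * p %| prodf f)) ->
  injectiveb f = (#|ones f| <= 1).
Proof.
move=> f_gt0 sqf; apply/injectiveP/idP => [f_inj|ones_le1 i j fij].
  rewrite leqNgt; apply/card_gt1P => -[i [j [/[!inE] /eqP fi1 /eqP fj1]]].
  by apply/negP; rewrite negbK; apply/eqP/f_inj/val_inj; rewrite /= fi1 fj1.
apply/eqP; apply: contraTT ones_le1 => ij; rewrite -ltnNge.
have pair_dvd : f i * f i %| prodf f.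
  by rewrite {2}fij (prodf_D1 f i) dvdn_mul // (bigD1 j) 1?eq_sym //= dvdn_mulr.
have fi1 : (f i : nat) = 1.
  have fi_gt0 : 0 < f i := dvdn_gt0 f_gt0 (dvdn_coord_prodf f i).
  apply/eqP; rewrite eqn_leq fi_gt0 andbT leqNgt; apply/negP => fi_gt1.
  move/negP: (sqf _ (pdiv_prime fi_gt1)); apply; apply: dvdn_trans pair_dvd.
  exact: dvdn_mul (pdiv_dvd _) (pdiv_dvd _).
by apply/card_gt1P; exists i, j; rewrite !inE -fij fi1.
Qed.

Lemma sum_noninjective_mobius_dvd n : 0 < n <= N ->
  (\sum_(f : T | ~~ injectiveb f) mobius_dvd n f =
   \sum_(0 <= j < r.+1) pair_weight j * (1 - (r - j)%:Z) ^+ omega n *+ 'C(r, j))%R.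
Proof.
move=> n_range.
have noninj_weight (f : T) : ((if ~~ injectiveb f then mobius_dvd n f else 0) =
    \sum_(S : {set 'I_r} | S \subset ones f) pair_weight #|S| * mobius_dvd n f)%R.
  rewrite -mulr_suml sum_subsets_card big_mkord sum_pair_weight_binom.
  have [->|fn0] := eqVneq (mobius_dvd n f) 0%R; first by rewrite mulr0 if_same.
  rewrite injectiveb_sqfree -?ltnNge; first by case: ifP; rewrite ?mul1r ?mul0r.
    by rewrite lt0n; apply: contra fn0 => /eqP/(mobius_dvd_prodf0 n)/eqP.
  by move=> p p_pr; apply: contra fn0 => /(mobius_dvd_sqr n p_pr)/eqP.
rewrite big_mkcond (eq_bigr _ (fun f _ => noninj_weight f)) /=.
rewrite (exchange_big_dep xpredT) //=.
under eq_bigr => S _ do rewrite -mulr_sumr (eq_bigl _ _ (fun f => esym (one_on_subset S f)))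
  -/(one_on_sum S n) one_on_sum_omega //.
rewrite -(eq_bigl _ _ (fun S => subsetT S)).
rewrite (sum_subsets_card _ (fun k => pair_weight k * (1 - (r - k)%:Z) ^+ omega n)%R).
by rewrite cardsT card_ord.
Qed.

Lemma sum_prodf_pos (P : pred T) (V : nmodType) (F : nat -> V) : F 0 = 0%R ->
  (\sum_(f : T | [forall i, 0 < (f i : nat)]%N && P f) F (prodf f) =
   \sum_(f : T | P f) F (prodf f))%R.
Proof.
move=> F0; rewrite [RHS](bigID (fun f : T => [forall i, 0 < (f i : nat)])) /=.
rewrite [X in (_ = _ + X)%R]big1 ?addr0 => [|f /andP[_ /forallPn[i]]].
  by apply: eq_bigl => f; rewrite andbC.
by rewrite -leqNgt leqn0 => /eqP fi0; rewrite (prodf_D1 f i) fi0 F0.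
Qed.

Lemma sum_mobius_quot_prodf (R : pzRingType) :
  (\sum_(f : T) (mobius_quot N (prodf f))%:~R =
   (\sum_(g : T | increasing g) (mobius_quot N (prodf g))%:~R) *+ r`! +
   \sum_(0 <= j < r.+1)
     (pair_weight j)%:~R * 'C(r, j)%:R * \sum_(1 <= n < N.+1) (1 - r%:R + j%:R) ^+ omega n
   :> R)%R.
Proof.
rewrite (bigID (fun f : T => injectiveb f)) /= sum_injective_increasing => [|f s]; last first.
  by rewrite prodf_perm.
congr (_ + _)%R; under eq_bigr => f _ do rewrite mobius_quot_prodf rmorph_sum.
rewrite exchange_big /=.
under eq_big_nat => n n_range do
  rewrite -rmorph_sum sum_noninjective_mobius_dvd // rmorph_sum.
rewrite exchange_big_nat /=; apply: eq_big_nat => j /andP[_ j_le_r].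
rewrite mulr_sumr; apply: eq_bigr => n _.
rewrite rmorphMn rmorphM rmorphXn rmorphB rmorph1 -natz rmorph_nat natrB //.
by rewrite opprB addrA addrAC -mulrnAl -mulr_natr.
Qed.

End CoordinateSums.


Local Open Scope ring_scope.

Lemma floor_divrn (R : archiRealFieldType) (x : R) m : 0 <= x -> (0 < m)%N ->
  Num.floor (x / m%:R) = (Num.truncn x %/ m)%:Z.
Proof.
move=> x_ge0 m_gt0; have m_pos : (0 : R) < m%:R by rewrite ltr0n.
apply: floor_def; rewrite intrD -!pmulrn ler_pdivlMr // ltr_pdivrMr // -natrM.
have /andP[trunc_le trunc_gt] := truncn_itv x_ge0.
rewrite (le_trans _ trunc_le) ?ler_nat ?leq_divM //=.
by rewrite (lt_le_trans trunc_gt) // -natrD -natrM ler_nat addn1 ltn_ceil.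
Qed.

Lemma mobius_floor_quot (R : archiRealFieldType) (x : R) m : 0 <= x ->
  (mobius m)%:~R * (Num.floor (x / m%:R))%:~R = (mobius_quot (Num.truncn x) m)%:~R :> R.
Proof.
move=> x_ge0; have [->|m_gt0] := posnP m; first by rewrite mobius0 !mul0r.
by rewrite floor_divrn // -intrM.
Qed.

Lemma sum_nat_from2 (V : nmodType) (F : nat -> V) n : F 0%N = 0 -> F 1%N = 0 ->
  \sum_(0 <= j < n) F j = \sum_(2 <= j < n) F j.
Proof.
move=> F0 F1; case: n => [|[|n]]; first by rewrite !big_geq.
  by rewrite big_nat1 big_geq.
by rewrite big_ltn // big_ltn // F0 F1 !add0r.
Qed.

Lemma intr_pair_weight (R : pzRingType) j :
  (pair_weight j)%:~R = (-1) ^+ j * j.-1%:R :> R.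
Proof.
case: j => [|[|j]]; rewrite /pair_weight /= ?mulr0 //.
by rewrite rmorphM rmorphXn rmorphN1 rmorphB rmorph_nat rmorph1 mulrSr addrK.
Qed.

Lemma sum_pow_omega0 (R : pzRingType) N : (0 < N)%N ->
  \sum_(1 <= n < N.+1) (0 : R) ^+ omega n = 1.
Proof.
move=> N_gt0; rewrite big_ltn // big1_seq ?addr0 // => n /andP[_].
rewrite mem_index_iota => /andP[n_gt1 _].
by rewrite expr0n /omega size_eq0 primes_eq0 ltnNge n_gt1.
Qed.

Lemma sum_pair_weight_omega (R : pzRingType) r N : (1 < r)%N -> (0 < N)%N ->
  \sum_(0 <= j < r.+1)
    (pair_weight j)%:~R * 'C(r, j)%:R * \sum_(1 <= n < N.+1) (1 - r%:R + j%:R : R) ^+ omega n =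
  \sum_(2 <= j < r.-1)
    (-1) ^+ j * j.-1%:R * 'C(r, j)%:R * \sum_(1 <= n < N.+1) (1 - r%:R + j%:R) ^+ omega n
  + (-1) ^+ r.-1 * (r - 2)%:R * r%:R + (-1) ^+ r * r.-1%:R * N%:R.
Proof.
case: r => [|[|k]] // _ N_gt0; rewrite !subSS subn0 /=.
have base_top : 1 - k.+2%:R + k.+2%:R = 1 :> R by rewrite subrK.
have base_sub : 1 - k.+2%:R + k.+1%:R = 0 :> R.
  by rewrite mulrS opprD addrA subrr add0r addNr.
under eq_bigr do rewrite intr_pair_weight.
rewrite big_nat_recr // big_nat_recr //= base_top base_sub sum_pow_omega0 //.
rewrite (eq_bigr (fun _ => 1) (fun n _ => expr1n _ (omega n))) sumr_const_nat.
by rewrite binn binSn !mulr1 subSS subn0 sum_nat_from2 //= mulr0 !mul0r.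
Qed.

Lemma decomposition_rescaled (R : numFieldType) r (L S M : R) : (1 < r)%N ->
  L = r`!%:R^-1 *
        (L *+ r`! + (S + (-1) ^+ r.-1 * (r - 2)%:R * r%:R + (-1) ^+ r * r.-1%:R * M))
      - r`!%:R^-1 * S - (-1) ^+ r * M / (r%:R * (r - 2)`!%:R)
      + (-1) ^+ r * (r%:R - 2) / (r.-1)`!%:R.
Proof.
case: r => [|[|k]] // _; rewrite !subSS subn0 /= !factS -mulr_natr !natrM.
have k_fact : k`!%:R != 0 :> R by rewrite pnatr_eq0 -lt0n fact_gt0.
have k1 : k.+1%:R != 0 :> R by rewrite pnatr_eq0.
have k2 : k.+2%:R != 0 :> R by rewrite pnatr_eq0.
move: k1 k2; rewrite -[k.+2%:R]natr1 -[k.+1%:R]natr1 !exprS => k1 k2.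
by field; rewrite k_fact k1 k2.
Qed.

Theorem lemma3p6 (R : realType) (r : nat) (x : R) :
  (2 <= r)%N -> 1 <= x ->
  let N := Num.truncn x in
  let term := fun m : nat =>
    (mobius m)%:~R * (Num.floor (x / m%:R))%:~R : R in
  \sum_(f : {ffun 'I_r -> 'I_N.+1} |
          [forall i, 0 < (f i : nat)]%N &&
          [forall i : 'I_r, forall j : 'I_r, (i < j)%N ==> (f i < f j)%N])
      term (\prod_(i < r) (f i : nat))%N
  = (r`!%:R)^-1 *
      \sum_(f : {ffun 'I_r -> 'I_N.+1} | [forall i, 0 < (f i : nat)]%N)
        term (\prod_(i < r) (f i : nat))%N
    - (r`!%:R)^-1 *
      \sum_(2 <= j < r.-1)
        (-1) ^+ j * (j.-1)%:R * 'C(r, j)%:R *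
        \sum_(1 <= n < N.+1) (1 - r%:R + j%:R) ^+ omega n
    - (-1) ^+ r * (Num.floor x)%:~R / (r%:R * (r - 2)`!%:R)
    + (-1) ^+ r * (r%:R - 2) / (r.-1)`!%:R.
Proof.
move=> r_ge2 x_ge1 N term.
have x_ge0 : 0 <= x := le_trans ler01 x_ge1.
have N_gt0 : (0 < N)%N by rewrite truncn_gt0.
pose F m : R := (mobius_quot N m)%:~R.
have F0 : F 0%N = 0 by rewrite /F /mobius_quot mobius0 mul0r.
have termE (f : {ffun 'I_r -> 'I_N.+1}) : term (prodf f) = F (prodf f).
  exact: mobius_floor_quot.
have floorE : Num.floor x = N%:Z.
  by have := floor_divrn x_ge0 (ltn0Sn 0); rewrite mulr1n divr1 divn1.
have sum_all : \sum_(f : {ffun 'I_r -> 'I_N.+1} | [forall i, 0 < (f i : nat)]%N)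
    term (prodf f) = \sum_(f : {ffun 'I_r -> 'I_N.+1}) F (prodf f).
  transitivity (\sum_(f : {ffun 'I_r -> 'I_N.+1} |
                  [forall i, 0 < (f i : nat)]%N && xpredT f) F (prodf f)).
    by apply: eq_big => [f|f _]; rewrite ?andbT ?termE.
  exact: (sum_prodf_pos xpredT F0).
rewrite sum_all (eq_bigr _ (fun f _ => termE f)) sum_prodf_pos //.
rewrite sum_mobius_quot_prodf sum_pair_weight_omega // floorE -pmulrn.
exact: decomposition_rescaled.
Qed.
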